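(* Consider the discrete all-pay auction in the model without ties, with values drawn i.i.d. from a distribution with full support on $X$. There is at most one symmetric equilibrium bidding function: if $\beta$ and $\beta'$ are both SE bidding functions then $\beta=\beta'$.
   Context: Model. There are $n\ge 2$ risk-neutral bidders competing for one indivisible object. Normalise the grid so that values and bids lie in $X=\{0,1,2,\dots,x\}$ for some $x\in\mathbb N$. Each bidder $i$ privately learns a value $v_i\in X$; values are drawn independently from a common distribution in which every element of $X$ has strictly positive probability. Each bidder submits a bid $b_i\in X$. A (pure) strategy is a bidding function $\beta:X\to X$. In the model without ties, bidder $i$ wins iff $b_i>b_j$ for all $j\neq i$ (if the highest bid is tied, nobody wins). In the all-pay auction, a bidder with value $v_i$ bidding $b_i$ gets expected payoff $v_i\Pr(i\text{ wins})-b_i$ (everyone pays their bid). An equilibrium is a profile of bidding functions such that each bidder's bidding function maximises their expected payoff given the others' bidding functions (a pure-strategy Bayes–Nash equilibrium) and such that no bidder uses a weakly dominated bidding function (a bidding function is weakly dominated if some other bidding function yields at least as high expected payoff against every profile of opponents' bidding functions, and strictly higher against some). A symmetric equilibrium (SE) is an equilibrium in which all bidders use the same bidding function $\beta$. *)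

From mathcomp Require Import all_boot all_order all_algebra.
Set Implicit Arguments. Unset Strict Implicit. Unset Printing Implicit Defensive.
Import Order.TTheory GRing.Theory Num.Theory.
Local Open Scope ring_scope.

Notation grid x := 'I_x.+1.

Definition bidfun (x : nat) := {ffun grid x -> grid x}.

Definition full_support_distr (R : realFieldType) (x : nat) (p : grid x -> R) :=
  (forall v, 0 < p v) /\ \sum_(v : grid x) p v = 1.

Definition prob_bid_below (R : realFieldType) (x : nat) (p : grid x -> R)
  (beta : bidfun x) (b : grid x) : R :=
  \sum_(v : grid x | (beta v < b)%N) p v.

(* Probability that bidder i with bid b wins (no ties: strictly above every other bid),
   when the other bidders j use prof j; values are independent. *)
Definition win_prob (R : realFieldType) (x n : nat) (p : grid x -> R)
  (prof : 'I_n -> bidfun x) (i : 'I_n) (b : grid x) : R :=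
  \prod_(j < n | j != i) prob_bid_below p (prof j) b.

(* Expected (ex-ante) payoff in the all-pay auction of bidder i using [beta]
   when the opponents j != i use prof j (prof i is ignored). *)
Definition allpay_payoff (R : realFieldType) (x n : nat) (p : grid x -> R)
  (prof : 'I_n -> bidfun x) (i : 'I_n) (beta : bidfun x) : R :=
  \sum_(v : grid x) p v *
     ((nat_of_ord v)%:R * win_prob p prof i (beta v) - (nat_of_ord (beta v))%:R).

Definition weakly_dominated (R : realFieldType) (x n : nat) (p : grid x -> R)
  (i : 'I_n) (beta : bidfun x) : Prop :=
  exists beta' : bidfun x,
    (forall prof : 'I_n -> bidfun x,
        allpay_payoff p prof i beta <= allpay_payoff p prof i beta') /\
    (exists prof : 'I_n -> bidfun x,
        allpay_payoff p prof i beta < allpay_payoff p prof i beta').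

Definition equilibrium (R : realFieldType) (x n : nat) (p : grid x -> R)
  (prof : 'I_n -> bidfun x) : Prop :=
  (forall (i : 'I_n) (beta' : bidfun x),
      allpay_payoff p prof i beta' <= allpay_payoff p prof i (prof i)) /\
  (forall i : 'I_n, ~ weakly_dominated p i (prof i)).

Definition symmetric_equilibrium (R : realFieldType) (x n : nat) (p : grid x -> R)
  (beta : bidfun x) : Prop :=
  equilibrium p (fun _ : 'I_n => beta).

From mathcomp Require Import all_boot all_order all_algebra.
From mathcomp Require Import ring lra.
Import Order.TTheory GRing.Theory Num.Theory.
Set Implicit Arguments. Unset Strict Implicit.
Local Open Scope ring_scope.

(* When all rivals use beta, a bid c wins with probability W(c) = G(c)^(n-1),
   where G(c) is the probability that beta(V) < c.  Since every value has
   positive probability, ex-ante optimality of beta forces every value v to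
   bid optimally, i.e. v W(beta v) - beta v >= v W(c) - c for every c.  This
   best-reply property and a single-crossing argument make beta nondecreasing;
   undominatedness forces beta(0) = 0.

   Uniqueness is then proved by induction on the value: if beta and beta'
   agree below v and beta v < beta' v, then under beta' the bid beta v + 1
   already wins as often as beta' v (no bids of beta' lie in between) while
   winning strictly less often than under beta (value v itself is missing
   from the mass below beta v + 1).  Combining the best-reply inequalities
   of beta and beta' at value v with these comparisons is contradictory. *)

Section AllPayAuction.
Variables (R : realFieldType) (x n : nat) (p : grid x -> R).
Hypothesis hn : (2 <= n)%N.
Hypothesis hp : full_support_distr p.

Lemma p_gt0 v : 0 < p v.
Proof. by case: hp. Qed.

Lemma p_ge0 v : 0 <= p v.
Proof. exact/ltW/p_gt0. Qed.

Lemma prob_bid_below_ge0 (b : bidfun x) c : 0 <= prob_bid_below p b c.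
Proof. by apply: sumr_ge0 => u _; apply: p_ge0. Qed.

Lemma prob_bid_below_mono (b : bidfun x) (c d : grid x) :
  (c <= d)%N -> prob_bid_below p b c <= prob_bid_below p b d.
Proof.
move=> le_cd; rewrite /prob_bid_below !(big_mkcond (fun v => (b v < _)%N)).
apply: ler_sum => u _; case: ifP => [lt_uc|_]; first by rewrite (leq_trans lt_uc le_cd).
by case: ifP => _ //; apply: p_ge0.
Qed.

Definition nondecreasing_bid (b : bidfun x) : Prop :=
  forall v w : grid x, (v <= w)%N -> (b v <= b w)%N.

Lemma prob_bid_below_cut (b : bidfun x) (v c : grid x) :
  nondecreasing_bid b -> (c <= b v)%N ->
  prob_bid_below p b c = \sum_(u : grid x | (u < v)%N && (b u < c)%N) p u.
Proof.
move=> mono_b le_c; apply: eq_bigl => u /=; case: (ltnP u v) => //= le_vu.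
by apply/negbTE; rewrite -leqNgt (leq_trans le_c) ?mono_b.
Qed.

Definition sym_win (b : bidfun x) (c : grid x) : R := prob_bid_below p b c ^+ n.-1.

Lemma win_prob_sym (b : bidfun x) (i : 'I_n) c :
  win_prob p (fun _ => b) i c = sym_win b c.
Proof.
rewrite /win_prob (eq_bigl (mem (predC1 i))) //.
by rewrite prodr_const cardC1 card_ord.
Qed.

Lemma sym_win_mono (b : bidfun x) (c d : grid x) :
  (c <= d)%N -> sym_win b c <= sym_win b d.
Proof.
move=> le_cd; apply: lerXn2r; rewrite ?nnegrE ?prob_bid_below_ge0 //.
exact: prob_bid_below_mono.
Qed.

Definition bid_utility (prof : 'I_n -> bidfun x) (i : 'I_n) (v c : grid x) : R :=
  (v : nat)%:R * win_prob p prof i c - (c : nat)%:R.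

Definition set_bid (b : bidfun x) (v c : grid x) : bidfun x :=
  [ffun u => if u == v then c else b u].

Lemma payoff_set_bid prof i (b : bidfun x) (v c : grid x) :
  allpay_payoff p prof i (set_bid b v c) =
  allpay_payoff p prof i b + p v * (bid_utility prof i v c - bid_utility prof i v (b v)).
Proof.
rewrite /allpay_payoff (bigD1 v) //= [in RHS](bigD1 v) //= ffunE eqxx.
rewrite (eq_bigr (fun u => p u * bid_utility prof i u (b u))); last first.
  by move=> u /negbTE neq_uv; rewrite ffunE neq_uv.
rewrite /bid_utility; ring.
Qed.

(* A bidding function in which value 0 bids a positive amount is weakly
   dominated: bidding 0 instead is strictly better against every profile. *)
Lemma positive_bid_at_zero_dominated (i : 'I_n) (b : bidfun x) :
  (0 < b ord0)%N -> weakly_dominated p i b.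
Proof.
move=> bid_pos.
have better prof : allpay_payoff p prof i b < allpay_payoff p prof i (set_bid b ord0 ord0).
  rewrite payoff_set_bid ltrDl /bid_utility /= !mul0r !sub0r opprK addrC subr0.
  by rewrite mulr_gt0 ?p_gt0 ?ltr0n.
exists (set_bid b ord0 ord0); split; first by move=> prof; apply/ltW/better.
by exists (fun _ => b).
Qed.

Section SymmetricEquilibrium.
Variable beta : bidfun x.
Hypothesis se : symmetric_equilibrium n p beta.

Let bidder : 'I_n := Ordinal (ltnW hn).

(* Best reply: in a symmetric equilibrium each value bids optimally, because
   a profitable deviation of one value would raise the ex-ante payoff. *)
Lemma sym_eq_best_reply (v c : grid x) :
  (v : nat)%:R * sym_win beta c - (c : nat)%:R <=
  (v : nat)%:R * sym_win beta (beta v) - (beta v : nat)%:R.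
Proof.
case: se => optimal _.
have := optimal bidder (set_bid beta v c).
rewrite payoff_set_bid gerDl pmulr_rle0 ?p_gt0 // subr_le0.
by rewrite /bid_utility !win_prob_sym.
Qed.

(* Single crossing: higher values never bid less. *)
Lemma sym_eq_monotone : nondecreasing_bid beta.
Proof.
move=> v w; rewrite leq_eqVlt => /orP [/eqP/val_inj -> //| lt_vw].
rewrite leqNgt; apply/negP => lt_bid.
have reply_v := sym_eq_best_reply v (beta w).
have reply_w := sym_eq_best_reply w (beta v).
have gap : 0 <= sym_win beta (beta v) - sym_win beta (beta w).
  by rewrite subr_ge0 sym_win_mono // ltnW.
have lt_val : (v : nat)%:R + 1 <= (w : nat)%:R :> R by rewrite natr1 ler_nat.
have lt_bidR : (beta w : nat)%:R + 1 <= (beta v : nat)%:R :> R by rewrite natr1 ler_nat.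
have v_ge0 : 0 <= (v : nat)%:R :> R by [].
nra.
Qed.

Lemma sym_eq_bid0 : beta ord0 = ord0.
Proof.
case: se => _ undominated; apply/val_inj/eqP; rewrite /= -leqn0 leqNgt.
by apply/negP => /(positive_bid_at_zero_dominated bidder); apply: undominated.
Qed.

End SymmetricEquilibrium.

Section Overbid.
Variables (b b' : bidfun x) (v next : grid x).
Hypotheses (mono_b : nondecreasing_bid b) (mono_b' : nondecreasing_bid b').
Hypothesis agree : forall u : grid x, (u < v)%N -> b u = b' u.
Hypothesis overbid : (b v < b' v)%N.
Hypothesis nextE : (next : nat) = (b v).+1.

(* At the bid b v, only values below v are beaten, on which b and b' agree. *)
Lemma overbid_same_win : sym_win b (b v) = sym_win b' (b v).
Proof.
rewrite /sym_win (prob_bid_below_cut (v := v) mono_b) //.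
rewrite (prob_bid_below_cut (v := v) mono_b') ?(ltnW overbid) //.
by congr (_ ^+ _); apply: eq_bigl => u; case: (ltnP u v) => //= /agree ->.
Qed.

(* b' places no bid in [b v + 1, b' v), so both bids win equally often. *)
Lemma overbid_gap_win : sym_win b' next = sym_win b' (b' v).
Proof.
rewrite /sym_win !(prob_bid_below_cut (v := v) mono_b') ?nextE //.
congr (_ ^+ _); apply: eq_bigl => u; case: (ltnP u v) => //= /[dup] lt_uv /agree <-.
have le_bid : (b u <= b v)%N by rewrite mono_b // ltnW.
by rewrite ltnS le_bid (leq_ltn_trans le_bid overbid).
Qed.

(* The bid b v + 1 beats value v under b but not under b'. *)
Lemma overbid_next_win : sym_win b' next < sym_win b next.
Proof.
have mass : prob_bid_below p b' next + p v <= prob_bid_below p b next.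
  rewrite (prob_bid_below_cut (v := v) mono_b') ?nextE // /prob_bid_below.
  rewrite [leRHS](bigD1 v) ?nextE //= [leLHS]addrC lerD2l big_mkcond [leRHS]big_mkcond /=.
  apply: ler_sum => u _; case: ifP => [/andP[lt_uv lt_bid]|_].
    by rewrite agree // lt_bid /= neq_ltn lt_uv.
  by case: ifP => _ //; apply: p_ge0.
rewrite /sym_win ltrXn2r ?prob_bid_below_ge0 //.
  by rewrite -lt0n -ltnS prednK ?(ltnW hn) // (leq_trans _ hn).
by apply: lt_le_trans mass; rewrite ltrDl p_gt0.
Qed.

End Overbid.

(* Value v
   would rather bid b v than b' v under b' (same chance as b v + 1), yet
   rather bid b v + 1 than b v under b, where b v + 1 wins strictly more. *)
Lemma sym_eq_no_overbid (b b' : bidfun x) (v : grid x) :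
  symmetric_equilibrium n p b -> symmetric_equilibrium n p b' ->
  (forall u : grid x, (u < v)%N -> b u = b' u) -> ~ (b v < b' v)%N.
Proof.
move=> se se' agree overbid.
have mono_b := sym_eq_monotone se; have mono_b' := sym_eq_monotone se'.
have v_gt0 : (0 < v)%N.
  rewrite lt0n; apply/eqP => v0; have v_ord0 : v = ord0 by apply: val_inj.
  by move: overbid; rewrite v_ord0 (sym_eq_bid0 se) (sym_eq_bid0 se').
have lt_next : ((b v).+1 < x.+1)%N by apply: leq_ltn_trans overbid (ltn_ord _).
pose next : grid x := Ordinal lt_next.
have reply' := sym_eq_best_reply se' v (b v).
rewrite -(overbid_same_win mono_b mono_b' agree overbid) in reply'.
rewrite -(overbid_gap_win (next := next) mono_b mono_b' agree overbid) // in reply'.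
have reply := sym_eq_best_reply se v next.
have gain : (v : nat)%:R * sym_win b' next < (v : nat)%:R * sym_win b next :> R.
  rewrite ltr_pM2l ?ltr0n //.
  exact: (overbid_next_win (next := next) mono_b' agree overbid).
have le_bid : (b v : nat)%:R + 1 <= (b' v : nat)%:R :> R by rewrite natr1 ler_nat.
have nextR : (next : nat)%:R = (b v : nat)%:R + 1 :> R by rewrite /= natr1.
rewrite nextR in reply.
have := le_trans reply (le_trans reply' (lerB (lexx _) le_bid)).
by rewrite lerD2r leNgt gain.
Qed.

End AllPayAuction.

Theorem lemma11 (R : realFieldType) (x n : nat) (p : 'I_x.+1 -> R)
  (hn : (2 <= n)%N) (hp : full_support_distr p)
  (beta beta' : bidfun x) :
  symmetric_equilibrium n p beta -> symmetric_equilibrium n p beta' ->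
  beta = beta'.
Proof.
move=> se se'; apply/ffunP.
suff agree_below m (v : grid x) : (v < m)%N -> beta v = beta' v.
  by move=> v; apply: (agree_below v.+1).
elim: m v => [//|m IH] v; rewrite ltnS leq_eqVlt => /orP[/eqP eq_vm|]; last exact: IH.
have agree (u : grid x) : (u < v)%N -> beta u = beta' u by rewrite eq_vm; apply: IH.
apply/val_inj/eqP; rewrite eqn_leq; apply/andP; split; rewrite leqNgt; apply/negP.
- by apply: (sym_eq_no_overbid hn hp se' se) => u /agree.
- exact: (sym_eq_no_overbid hn hp se se').
Qed.
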